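(* The canonical model $\mathcal{M}^{Can}$ is a Trust model; that is, $R$ is serial and transitive, and for each $\Gamma\in I$ and each propositional formula $\varphi$, $\|\varphi\|_\Gamma\neq\emptyset$ implies $\mathit{most}(\|\varphi\|_\Gamma)\neq\emptyset$.
   Context: $\mathcal{L}_T$: $\alpha::=\varphi\mid\varphi\rightsquigarrow\varphi\mid B(\alpha)\mid\alpha*\alpha\mid\neg\alpha$, with $\varphi$ ranging over classical propositional formulas (set $\mathcal{L}_{CL}$) and $*\in\{\land,\lor,\to,\leftrightarrow\}$. SBTrust is the Hilbert system ($\varphi,\psi,\chi,\varphi_i,\psi_i$ propositional; $\alpha,\beta\in\mathcal{L}_T$; rule outputs in $\mathcal{L}_T$): classical tautologies and Modus Ponens; $\varphi\rightsquigarrow\varphi$; $(\varphi\rightsquigarrow\bot)\to\neg\varphi$; $((\psi\land\chi)\rightsquigarrow\varphi)\to(\psi\rightsquigarrow(\chi\to\varphi))$; $(\neg(\varphi\leftrightarrow\psi)\rightsquigarrow\bot)\to((\varphi\rightsquigarrow\chi)\leftrightarrow(\psi\rightsquigarrow\chi))$; rule RCK: from $(\varphi_1\land\dots\land\varphi_n)\to\varphi_{n+1}$ infer $\bigwedge_{j\le n}(\psi\rightsquigarrow\varphi_j)\to(\psi\rightsquigarrow\varphi_{n+1})$; rule $\mathbf{S5_F}$: from $(\ell_1\land\dots\land\ell_n)\to\chi$ infer $(\ell_1\land\dots\land\ell_n)\to(\neg\chi\rightsquigarrow\bot)$, each $\ell_j$ being $\varphi_j\rightsquigarrow\psi_j$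 or its negation, $\chi$ propositional; $B(\alpha\to\beta)\to(B\alpha\to B\beta)$; $B\alpha\to\neg B\neg\alpha$; $B\alpha\to BB\alpha$; necessitation for $B$. MCS: $\Gamma\subseteq\mathcal{L}_T$ with $\Gamma\nvdash\bot$ and, for each $\alpha$, $\alpha\in\Gamma$ or $\neg\alpha\in\Gamma$. $\Gamma\leftrightsquigarrow\Delta$ iff the MCSs contain the same formulas of the form $\chi\rightsquigarrow\psi$; $[\Gamma]_\leftrightsquigarrow$ its class. $\rightsquigarrow_\varphi(\Gamma)=\{\psi:\varphi\rightsquigarrow\psi\in\Gamma\}$; $\Delta$ is $\varphi$-likely for $\Gamma$ if $\rightsquigarrow_\varphi(\Gamma)\subseteq\Delta$. $S_\Gamma=[\Gamma]_\leftrightsquigarrow\times\mathcal{L}_{CL}\times\{0,1,2\}$; $(\Delta,\varphi,i)\succeq_\Gamma(\Omega,\psi,j)$ iff ($\Delta$ is $\varphi$-likely for $\Gamma$ and $\varphi\in\Omega$) or ($i=1,j=0$) or ($i=2,j=1$) or ($i=0,j=2$). Fix a set $I$ containing exactly one representative of each $\leftrightsquigarrow$-class. The canonical model is $\mathcal{M}^{Can}=\langle S,(S_\Gamma)_{\Gamma\in I},(\succeq_\Gamma)_{\Gamma\in I},R,V\rangle$ with $S=\bigcup_{\Gamma\in I}S_\Gamma$, $V(p)=\{(\Delta,\varphi,i)\in S:p\in\Delta\}$, and $(\Delta,\varphi,i)R(\Omega,\psi,j)$ iff for all $\alpha\in\mathcal{L}_T$, $B(\alpha)\in\Delta\Rightarrow\alpha\in\Omega$.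 Truth: $s\models p$ iff $s\in V(p)$; Boolean clauses as usual; $s\models\varphi\rightsquigarrow\psi$ iff $\mathit{most}(\|\varphi\|_\Gamma)\subseteq\|\psi\|_\Gamma$ where $s\in S_\Gamma$; $s\models B(\alpha)$ iff $v\models\alpha$ for all $v$ with $sRv$; here $\|\varphi\|_\Gamma=\{v\in S_\Gamma:v\models\varphi\}$ and $\mathit{most}(X)=\{x\in X:\forall y\in X\,(y\succeq_\Gamma x\Rightarrow x\succeq_\Gamma y)\}$. A Trust model is a structure $\langle S,(S_i)_{i\in I},(\succeq_i)_{i\in I},R,V\rangle$ where $R\subseteq S\times S$ is serial and transitive, $(S_i)$ is a partition of $S$, each $\succeq_i\subseteq S_i\times S_i$, $V$ maps variables to subsets of $S$, and limitedness holds: for every $i$ and propositional $\varphi$, $\|\varphi\|_i\neq\emptyset\Rightarrow\mathit{most}(\|\varphi\|_i)\neq\emptyset$. *)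

From Stdlib Require Import List Bool.
Import ListNotations.

Inductive pform : Type :=
| PVar : nat -> pform
| PBot : pform
| PNot : pform -> pform
| PAnd : pform -> pform -> pform
| POr  : pform -> pform -> pform
| PImp : pform -> pform -> pform
| PIff : pform -> pform -> pform.

Definition PTop : pform := PNot PBot.

Inductive tform : Type :=
| TProp : pform -> tform
| TCond : pform -> pform -> tform
| TB    : tform -> tform
| TNot  : tform -> tform
| TAnd  : tform -> tform -> tform
| TOr   : tform -> tform -> tform
| TImp  : tform -> tform -> tform
| TIff  : tform -> tform -> tform.

Definition TBot : tform := TProp PBot.
Definition TTop : tform := TProp PTop.

Fixpoint pconj (l : list pform) : pform :=
  match l with
  | [] => PTop
  | [x] => x
  | x :: r => PAnd x (pconj r)
  end.

Fixpoint tconj (l : list tform) : tform :=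
  match l with
  | [] => TTop
  | [x] => x
  | x :: r => TAnd x (tconj r)
  end.

(* Boolean evaluation, treating propositional variables, conditionals
   phi ~> psi and belief formulas B alpha as atoms. *)
Fixpoint peval (v : nat -> bool) (f : pform) : bool :=
  match f with
  | PVar n => v n
  | PBot => false
  | PNot a => negb (peval v a)
  | PAnd a b => peval v a && peval v b
  | POr a b => peval v a || peval v b
  | PImp a b => implb (peval v a) (peval v b)
  | PIff a b => eqb (peval v a) (peval v b)
  end.

Fixpoint teval (v : nat -> bool) (vc : pform -> pform -> bool)
  (vb : tform -> bool) (f : tform) : bool :=
  match f with
  | TProp p => peval v p
  | TCond p q => vc p q
  | TB a => vb a
  | TNot a => negb (teval v vc vb a)
  | TAnd a b => teval v vc vb a && teval v vc vb b
  | TOr a b => teval v vc vb a || teval v vc vb b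
  | TImp a b => implb (teval v vc vb a) (teval v vc vb b)
  | TIff a b => eqb (teval v vc vb a) (teval v vc vb b)
  end.

Definition tautology (a : tform) : Prop :=
  forall v vc vb, teval v vc vb a = true.

Definition is_literal (t : tform) : Prop :=
  exists p q, t = TCond p q \/ t = TNot (TCond p q).

Inductive Thm : tform -> Prop :=
| ax_taut : forall a, tautology a -> Thm a
| r_mp : forall a b, Thm a -> Thm (TImp a b) -> Thm b
| ax_id : forall p, Thm (TCond p p)
| ax_bot : forall p, Thm (TImp (TCond p PBot) (TProp (PNot p)))
| ax_sh : forall p q r,
    Thm (TImp (TCond (PAnd q r) p) (TCond q (PImp r p)))
| ax_lle : forall p q r,
    Thm (TImp (TCond (PNot (PIff p q)) PBot)
              (TIff (TCond p r) (TCond q r)))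
| r_rck : forall (q : pform) (l : list pform) (p : pform),
    Thm (TProp (PImp (pconj l) p)) ->
    Thm (TImp (tconj (map (fun pj => TCond q pj) l)) (TCond q p))
| r_s5f : forall (l : list tform) (c : pform),
    Forall is_literal l ->
    Thm (TImp (tconj l) (TProp c)) ->
    Thm (TImp (tconj l) (TCond (PNot c) PBot))
| ax_K : forall a b, Thm (TImp (TB (TImp a b)) (TImp (TB a) (TB b)))
| ax_D : forall a, Thm (TImp (TB a) (TNot (TB (TNot a))))
| ax_4 : forall a, Thm (TImp (TB a) (TB (TB a)))
| r_nec : forall a, Thm a -> Thm (TB a).

Definition Derives (G : tform -> Prop) (a : tform) : Prop :=
  exists l, Forall G l /\ Thm (TImp (tconj l) a).

Definition MCS (G : tform -> Prop) : Prop :=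
  ~ Derives G TBot /\ forall a, G a \/ G (TNot a).

Definition cond_equiv (G D : tform -> Prop) : Prop :=
  forall p q, G (TCond p q) <-> D (TCond p q).

Definition likely (G : tform -> Prop) (p : pform) (D : tform -> Prop) : Prop :=
  forall q, G (TCond p q) -> D (TProp q).

Section Models.
Variables (X Idx : Type).

Fixpoint psat (V : nat -> X -> Prop) (s : X) (f : pform) : Prop :=
  match f with
  | PVar n => V n s
  | PBot => False
  | PNot a => ~ psat V s a
  | PAnd a b => psat V s a /\ psat V s b
  | POr a b => psat V s a \/ psat V s b
  | PImp a b => psat V s a -> psat V s b
  | PIff a b => psat V s a <-> psat V s b
  end.

Definition most (ge : X -> X -> Prop) (A : X -> Prop) (x : X) : Prop :=
  A x /\ forall y, A y -> ge y x -> ge x y.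

Definition ext (Si : X -> Prop) (V : nat -> X -> Prop) (f : pform) (x : X) : Prop :=
  Si x /\ psat V x f.

Definition TrustModel (S : X -> Prop) (I : Idx -> Prop) (Sf : Idx -> X -> Prop)
  (ge : Idx -> X -> X -> Prop) (R : X -> X -> Prop) (V : nat -> X -> Prop) : Prop :=
  (forall s t, R s t -> S s /\ S t) /\
  (forall s, S s -> exists t, R s t) /\
  (forall s t u, R s t -> R t u -> R s u) /\
  (forall i, I i -> exists x, Sf i x) /\
  (forall i x, I i -> Sf i x -> S x) /\
  (forall x, S x -> exists i, I i /\ Sf i x) /\
  (forall i j x, I i -> I j -> Sf i x -> Sf j x -> i = j) /\
  (forall i x y, I i -> ge i x y -> Sf i x /\ Sf i y) /\
  (forall p x, V p x -> S x) /\
  (forall i f, I i -> (exists x, ext (Sf i) V f x) ->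
                      exists x, most (ge i) (ext (Sf i) V f) x).
End Models.

Inductive three : Type := T0 | T1 | T2.

Definition cstate : Type := ((tform -> Prop) * pform * three)%type.

Definition rep_set (I : (tform -> Prop) -> Prop) : Prop :=
  (forall G, I G -> MCS G) /\
  (forall D, MCS D -> exists G, I G /\ cond_equiv G D) /\
  (forall G G', I G -> I G' -> cond_equiv G G' -> G = G').

Definition CanSi (G : tform -> Prop) (s : cstate) : Prop :=
  let '(D, _, _) := s in MCS D /\ cond_equiv G D.

Definition CanS (I : (tform -> Prop) -> Prop) (s : cstate) : Prop :=
  exists G, I G /\ CanSi G s.

Definition cyc (i j : three) : Prop :=
  (i = T1 /\ j = T0) \/ (i = T2 /\ j = T1) \/ (i = T0 /\ j = T2).

Definition CanGe (G : tform -> Prop) (s t : cstate) : Prop :=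
  CanSi G s /\ CanSi G t /\
  let '(D, p, i) := s in let '(Om, _, j) := t in
  ((likely G p D /\ Om (TProp p)) \/ cyc i j).

Definition CanR (I : (tform -> Prop) -> Prop) (s t : cstate) : Prop :=
  CanS I s /\ CanS I t /\
  let '(D, _, _) := s in let '(Om, _, _) := t in
  forall a, D (TB a) -> Om a.

Definition CanV (I : (tform -> Prop) -> Prop) (n : nat) (s : cstate) : Prop :=
  CanS I s /\ let '(D, _, _) := s in D (TProp (PVar n)).

(* Seriality and transitivity of R are the usual canonical-model facts for the
   KD4 belief modality: the B-contents of a maximal consistent set are
   consistent (axiom D) and axiom 4 propagates them along R.  For limitedness,
   if some state of S_Gamma satisfies phi, then phi ~> bot is not in Gamma, and
   this makes the conditional consequences of phi in Gamma together with the
   conditional literals of Gamma consistent: an inconsistency would, through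
   S5_F, LLE and RCK, yield phi ~> bot.  A Lindenbaum extension Delta of that
   set lies in [Gamma], is phi-likely for Gamma and contains phi, so the state
   (Delta, phi, 0) is >=_Gamma-above every state satisfying phi. *)
From Stdlib Require Import List Bool Classical Lia Cantor.
Import ListNotations.

Lemma teval_tconj v vc vb l : teval v vc vb (tconj l) = forallb (teval v vc vb) l.
Proof.
  induction l as [|x [|y r] IH]; [reflexivity | apply eq_sym, andb_true_r |].
  change (tconj (x :: y :: r)) with (TAnd x (tconj (y :: r))).
  cbn [teval]. now rewrite IH.
Qed.

Lemma peval_pconj v l : peval v (pconj l) = forallb (peval v) l.
Proof.
  induction l as [|x [|y r] IH]; [reflexivity | apply eq_sym, andb_true_r |].
  change (pconj (x :: y :: r)) with (PAnd x (pconj (y :: r))).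
  cbn [peval]. now rewrite IH.
Qed.

Lemma forallb_map_TProp v vc vb l :
  forallb (teval v vc vb) (map TProp l) = forallb (peval v) l.
Proof. induction l as [|x l IH]; cbn; congruence. Qed.

Ltac taut :=
  let v := fresh "v" in let vc := fresh "vc" in let vb := fresh "vb" in
  intros v vc vb;
  do 2 (cbn [forallb teval peval TBot TTop PTop];
        rewrite ?teval_tconj, ?forallb_app, ?forallb_map_TProp, ?peval_pconj);
  cbn [forallb teval peval];
  repeat match goal with
  | |- context [teval v vc vb ?x] => destruct (teval v vc vb x)
  | |- context [peval v ?x] => destruct (peval v x)
  | |- context [vc ?p ?q] => destruct (vc p q)
  | |- context [vb ?a] => destruct (vb a)
  | |- context [forallb ?f ?l] => destruct (forallb f l)
  end; reflexivity.

Lemma thm_taut_mp a b : Thm a -> tautology (TImp a b) -> Thm b.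
Proof. intros Ha Hab. exact (r_mp a b Ha (ax_taut _ Hab)). Qed.

Lemma thm_taut_mp2 a b c :
  Thm a -> Thm b -> tautology (TImp a (TImp b c)) -> Thm c.
Proof. intros Ha Hb Habc. exact (r_mp b c Hb (thm_taut_mp a _ Ha Habc)). Qed.

Lemma thm_tconj_incl l1 l2 b :
  incl l1 l2 -> Thm (TImp (tconj l1) b) -> Thm (TImp (tconj l2) b).
Proof.
  intros Hincl Hl1. apply (thm_taut_mp _ _ Hl1). intros v vc vb. cbn [teval].
  rewrite !teval_tconj.
  destruct (forallb (teval v vc vb) l2) eqn:E2;
    [| now destruct (forallb _ l1), (teval v vc vb b)].
  replace (forallb (teval v vc vb) l1) with true; [now destruct (teval v vc vb b)|].
  symmetry. rewrite forallb_forall in *. auto.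
Qed.

Definition consistent (X : tform -> Prop) : Prop := ~ Derives X TBot.

Definition extend (X : tform -> Prop) (a : tform) (x : tform) : Prop := X x \/ x = a.

Lemma Derives_mono (X Y : tform -> Prop) b :
  (forall x, X x -> Y x) -> Derives X b -> Derives Y b.
Proof. intros HXY [l [Hl Hb]]. exists l. split; [eapply Forall_impl|]; eauto. Qed.

Lemma consistent_mono (X Y : tform -> Prop) :
  (forall x, X x -> Y x) -> consistent Y -> consistent X.
Proof. intros HXY HY HX. exact (HY (Derives_mono X Y _ HXY HX)). Qed.

Lemma Derives_of_mem (X : tform -> Prop) a : X a -> Derives X a.
Proof. intros Ha. exists [a]. split; [now constructor | apply ax_taut; taut]. Qed.

Lemma Forall_extend_split (X : tform -> Prop) a l :
  Forall (extend X a) l -> exists l', Forall X l' /\ incl l (a :: l').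
Proof.
  induction 1 as [|x r [Hx| ->] _ [l' [Hl' Hincl]]].
  - exists []. split; [constructor | intros x []].
  - exists (x :: l'). split; [now constructor|].
    intros y [<- | Hy]; [simpl; tauto | specialize (Hincl y Hy); simpl in *; tauto].
  - exists l'. split; [exact Hl'|]. intros y [<- | Hy]; [now left | auto].
Qed.

Lemma Derives_extend (X : tform -> Prop) a b :
  Derives (extend X a) b -> Derives X (TImp a b).
Proof.
  intros [l [Hl Hb]]. destruct (Forall_extend_split X a l Hl) as [l' [Hl' Hincl]].
  exists l'. split; [exact Hl'|].
  apply (thm_taut_mp _ _ (thm_tconj_incl _ _ _ Hincl Hb)).
  destruct l' as [|y l']; taut.
Qed.

Lemma Derives_taut_mp2 (X : tform -> Prop) a b c :
  Derives X a -> Derives X b -> tautology (TImp a (TImp b c)) -> Derives X c.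
Proof.
  intros [l1 [Hl1 Ha]] [l2 [Hl2 Hb]] Habc.
  exists (l1 ++ l2). split; [now apply Forall_app|].
  apply (thm_taut_mp2 _ _ _ (thm_tconj_incl l1 (l1 ++ l2) a (incl_appl _ (incl_refl _)) Ha)
           (thm_tconj_incl l2 (l1 ++ l2) b (incl_appr _ (incl_refl _)) Hb)).
  intros v vc vb. specialize (Habc v vc vb). cbn [teval] in *.
  destruct (teval v vc vb (tconj (l1 ++ l2))), (teval v vc vb a), (teval v vc vb b),
    (teval v vc vb c); easy.
Qed.

Lemma consistent_extend (X : tform -> Prop) a :
  consistent X -> consistent (extend X a) \/ consistent (extend X (TNot a)).
Proof.
  intros HX. apply NNPP. intros Hboth. apply HX.
  apply (Derives_taut_mp2 X (TImp a TBot) (TImp (TNot a) TBot));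
    [ apply Derives_extend, NNPP | apply Derives_extend, NNPP | taut ]; tauto.
Qed.

Section MaximalConsistent.
Variable D : tform -> Prop.
Hypothesis HD : MCS D.

Lemma mcs_derives b : Derives D b -> D b.
Proof.
  intros Hb. destruct (proj2 HD b) as [|Hnb]; [assumption|].
  exfalso. apply (proj1 HD).
  apply (Derives_taut_mp2 D b (TNot b)); [exact Hb | now apply Derives_of_mem | taut].
Qed.

Lemma mcs_thm_mp a b : D a -> Thm (TImp a b) -> D b.
Proof. intros Ha Hab. apply mcs_derives. exists [a]. split; [now constructor | exact Hab]. Qed.

Lemma mcs_thm a : Thm a -> D a.
Proof.
  intros Ha. apply mcs_derives. exists []. split; [constructor|].
  apply (thm_taut_mp _ _ Ha). taut.
Qed.

Lemma mcs_not a : D (TNot a) <-> ~ D a.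
Proof.
  split.
  - intros Hna Ha. apply (proj1 HD).
    apply (Derives_taut_mp2 D a (TNot a)); [now apply Derives_of_mem.. | taut].
  - intros Hna. destruct (proj2 HD a); tauto.
Qed.

Lemma mcs_closed l b : Forall D l -> Thm (TImp (tconj l) b) -> D b.
Proof. intros Hl Hb. apply mcs_derives. now exists l. Qed.

End MaximalConsistent.

Ltac mcs_taut HD l :=
  apply (mcs_closed _ HD l); [repeat constructor; assumption | apply ax_taut; taut].

Section PropositionalTruth.
Variable D : tform -> Prop.
Hypothesis HD : MCS D.

Lemma mcs_pnot a : D (TProp (PNot a)) <-> ~ D (TProp a).
Proof.
  rewrite <- (mcs_not D HD). split; intros H.
  - mcs_taut HD [TProp (PNot a)].
  - mcs_taut HD [TNot (TProp a)].
Qed.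

Lemma mcs_pand a b : D (TProp (PAnd a b)) <-> D (TProp a) /\ D (TProp b).
Proof.
  split.
  - intros H. split; mcs_taut HD [TProp (PAnd a b)].
  - intros [Ha Hb]. mcs_taut HD [TProp a; TProp b].
Qed.

Lemma mcs_por a b : D (TProp (POr a b)) <-> D (TProp a) \/ D (TProp b).
Proof.
  split.
  - intros H. destruct (proj2 HD (TProp a)) as [Ha|Hna]; [now left | right].
    mcs_taut HD [TProp (POr a b); TNot (TProp a)].
  - intros [Ha|Hb]; [mcs_taut HD [TProp a] | mcs_taut HD [TProp b]].
Qed.

Lemma mcs_pimp a b : D (TProp (PImp a b)) <-> (D (TProp a) -> D (TProp b)).
Proof.
  split.
  - intros H Ha. mcs_taut HD [TProp (PImp a b); TProp a].
  - intros H. destruct (proj2 HD (TProp a)) as [Ha|Hna].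
    + specialize (H Ha). mcs_taut HD [TProp b].
    + mcs_taut HD [TNot (TProp a)].
Qed.

Lemma mcs_piff a b : D (TProp (PIff a b)) <-> (D (TProp a) <-> D (TProp b)).
Proof.
  split.
  - intros H. split; intros Hx;
      [mcs_taut HD [TProp (PIff a b); TProp a] | mcs_taut HD [TProp (PIff a b); TProp b]].
  - intros H. destruct (proj2 HD (TProp a)) as [Ha|Hna], (proj2 HD (TProp b)) as [Hb|Hnb].
    + mcs_taut HD [TProp a; TProp b].
    + exfalso. apply (proj1 (mcs_not D HD _) Hnb), H, Ha.
    + exfalso. apply (proj1 (mcs_not D HD _) Hna), H, Hb.
    + mcs_taut HD [TNot (TProp a); TNot (TProp b)].
Qed.

End PropositionalTruth.

Fixpoint pcode (f : pform) : nat :=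
  match f with
  | PVar n => to_nat (0, n)
  | PBot => to_nat (1, 0)
  | PNot a => to_nat (2, pcode a)
  | PAnd a b => to_nat (3, to_nat (pcode a, pcode b))
  | POr a b => to_nat (4, to_nat (pcode a, pcode b))
  | PImp a b => to_nat (5, to_nat (pcode a, pcode b))
  | PIff a b => to_nat (6, to_nat (pcode a, pcode b))
  end.

Fixpoint tcode (f : tform) : nat :=
  match f with
  | TProp p => to_nat (0, pcode p)
  | TCond a b => to_nat (1, to_nat (pcode a, pcode b))
  | TB a => to_nat (2, tcode a)
  | TNot a => to_nat (3, tcode a)
  | TAnd a b => to_nat (4, to_nat (tcode a, tcode b))
  | TOr a b => to_nat (5, to_nat (tcode a, tcode b))
  | TImp a b => to_nat (6, to_nat (tcode a, tcode b))
  | TIff a b => to_nat (7, to_nat (tcode a, tcode b))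
  end.

Lemma to_nat_inj (a b c d : nat) : to_nat (a, b) = to_nat (c, d) -> a = c /\ b = d.
Proof.
  intros H. apply (f_equal of_nat) in H. rewrite !cancel_of_to in H.
  now injection H.
Qed.

Ltac decode_pairs :=
  repeat match goal with
  | H : to_nat (_, _) = to_nat (_, _) |- _ =>
      let H1 := fresh in let H2 := fresh in
      destruct (to_nat_inj _ _ _ _ H) as [H1 H2]; clear H;
      try discriminate H1; try discriminate H2
  end.

Lemma pcode_inj a b : pcode a = pcode b -> a = b.
Proof.
  revert b; induction a; destruct b; cbn [pcode]; intros H; decode_pairs; f_equal; auto.
Qed.

Lemma tcode_inj a b : tcode a = tcode b -> a = b.
Proof.
  revert b; induction a; destruct b; cbn [tcode]; intros H; decode_pairs; f_equal;
    auto using pcode_inj.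
Qed.

Section Lindenbaum.
Variable X : tform -> Prop.
Hypothesis HX : consistent X.

Fixpoint stage (n : nat) : tform -> Prop :=
  match n with
  | 0 => X
  | S m => fun a => stage m a \/ (tcode a = m /\ consistent (extend (stage m) a))
  end.

Lemma stage_mono n m a : n <= m -> stage n a -> stage m a.
Proof. induction 1; cbn; auto. Qed.

Lemma stage_consistent n : consistent (stage n).
Proof.
  induction n as [|m IH]; [exact HX|].
  destruct (classic (exists a, tcode a = m /\ consistent (extend (stage m) a)))
    as [[a [Ha Hcons]] | Hnone].
  - refine (consistent_mono _ _ _ Hcons).
    intros x [Hx | [Hx _]]; [now left | right; apply tcode_inj; congruence].
  - refine (consistent_mono _ _ _ IH).
    intros x [Hx | Hx]; [exact Hx | exfalso; eauto].
Qed.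

Definition limit (a : tform) : Prop := exists n, stage n a.

Lemma limit_finite l : Forall limit l -> exists n, Forall (stage n) l.
Proof.
  induction 1 as [|x r [k Hk] _ [n Hn]]; [exists 0; constructor|].
  exists (max k n). constructor.
  - apply (stage_mono k); [lia | exact Hk].
  - refine (Forall_impl _ _ Hn). intros y. apply stage_mono. lia.
Qed.

Lemma limit_consistent : consistent limit.
Proof.
  intros [l [Hl Hbot]]. destruct (limit_finite l Hl) as [n Hn].
  apply (stage_consistent n). now exists l.
Qed.

Lemma consistent_extend_stage_mono n m a :
  n <= m -> consistent (extend (stage m) a) -> consistent (extend (stage n) a).
Proof.
  intros Hnm. apply consistent_mono.
  intros x [Hx | Hx]; [left; exact (stage_mono n m x Hnm Hx) | now right].
Qed.

Lemma limit_complete a : limit a \/ limit (TNot a).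
Proof.
  set (n := max (tcode a) (tcode (TNot a))).
  destruct (consistent_extend (stage n) a (stage_consistent n)) as [Ha | Hna].
  - left. exists (S (tcode a)). right. split; [reflexivity|].
    apply (consistent_extend_stage_mono _ n); [lia | exact Ha].
  - right. exists (S (tcode (TNot a))). right. split; [reflexivity|].
    apply (consistent_extend_stage_mono _ n); [lia | exact Hna].
Qed.

Lemma lindenbaum : exists D, MCS D /\ forall a, X a -> D a.
Proof.
  exists limit. split; [split; [exact limit_consistent | exact limit_complete]|].
  intros a Ha. now exists 0.
Qed.

End Lindenbaum.

Definition believed (D : tform -> Prop) (a : tform) : Prop := D (TB a).

Section Belief.
Variable D : tform -> Prop.
Hypothesis HD : MCS D.

Lemma mcs_B_mp a b : D (TB (TImp a b)) -> D (TB a) -> D (TB b).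
Proof.
  intros Hab Ha. apply (mcs_closed D HD [TB (TImp a b); TB a]); [now repeat constructor|].
  apply (thm_taut_mp _ _ (ax_K a b)). taut.
Qed.

Lemma mcs_B_taut a : tautology a -> D (TB a).
Proof. intros Ha. apply (mcs_thm D HD), r_nec, ax_taut, Ha. Qed.

Lemma mcs_B_tconj l : Forall (believed D) l -> D (TB (tconj l)).
Proof.
  induction 1 as [|x [|y r] Hx _ IH]; [apply mcs_B_taut; taut | exact Hx|].
  change (tconj (x :: y :: r)) with (TAnd x (tconj (y :: r))).
  apply (mcs_B_mp (tconj (y :: r))); [|exact IH].
  apply (mcs_B_mp x); [apply mcs_B_taut; taut | exact Hx].
Qed.

Lemma believed_consistent : consistent (believed D).
Proof.
  intros [l [Hl Hbot]].
  assert (HBbot : D (TB TBot)).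
  { apply (mcs_B_mp (tconj l)); [apply (mcs_thm D HD), r_nec, Hbot | now apply mcs_B_tconj]. }
  apply (proj1 (mcs_not D HD _) (mcs_thm_mp D HD _ _ HBbot (ax_D TBot))).
  apply mcs_B_taut. taut.
Qed.

Lemma believed_transitive a : D (TB a) -> believed D (TB a).
Proof. intros Ha. exact (mcs_thm_mp D HD _ _ Ha (ax_4 a)). Qed.

End Belief.

Section Conditionals.
Variable G : tform -> Prop.
Hypothesis HG : MCS G.

Lemma mcs_rck f ps p :
  Forall (fun q => G (TCond f q)) ps -> Thm (TProp (PImp (pconj ps) p)) -> G (TCond f p).
Proof.
  intros Hps Hp. apply (mcs_closed G HG (map (fun q => TCond f q) ps)).
  - now apply Forall_map.
  - now apply r_rck.
Qed.

Lemma mcs_s5f ls c :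
  Forall is_literal ls -> Forall G ls -> Thm (TImp (tconj ls) (TProp c)) ->
  G (TCond (PNot c) PBot).
Proof. intros Hlit Hls Hc. exact (mcs_closed G HG ls _ Hls (r_s5f ls c Hlit Hc)). Qed.

Lemma mcs_lle p q r :
  G (TCond (PNot (PIff p q)) PBot) -> (G (TCond p r) <-> G (TCond q r)).
Proof.
  intros Hpq. pose proof (mcs_thm_mp G HG _ _ Hpq (ax_lle p q r)) as Hiff.
  split; intros H; [mcs_taut HG [TIff (TCond p r) (TCond q r); TCond p r]
                  | mcs_taut HG [TIff (TCond p r) (TCond q r); TCond q r]].
Qed.

(* ~>_f(Gamma) together with the conditional literals of Gamma: its maximal consistent
   extensions are the f-likely members of [Gamma]. *)
Definition likely_seed (f : pform) (a : tform) : Prop :=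
  (exists q, a = TProp q /\ G (TCond f q)) \/ (is_literal a /\ G a).

Lemma Forall_likely_seed_split f l : Forall (likely_seed f) l ->
  exists ps ls, Forall (fun q => G (TCond f q)) ps /\ Forall is_literal ls /\
    Forall G ls /\ incl l (ls ++ map TProp ps).
Proof.
  induction 1 as [|x r Hx _ [ps [ls [Hps [Hlit [Hls Hincl]]]]]].
  - exists [], []. repeat split; [constructor.. | intros x []].
  - destruct Hx as [[q [-> Hq]] | [Hxlit Hx]].
    + exists (q :: ps), ls. repeat split; [now constructor | assumption.. |].
      intros y [<- | Hy]; apply in_or_app; [right; now left|].
      destruct (in_app_or _ _ _ (Hincl y Hy)); [now left | right; now right].
    + exists ps, (x :: ls). repeat split; [assumption | now constructor.. |].
      intros y [<- | Hy]; [now left | right; auto].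
Qed.

(* With [P] the conjunction of the conditional consequences involved and [b := f /\ ~P],
   the literals force [f <-> b], so by S5_F and LLE [f] and [b] have the same
   conditional consequences; [b ~> P] and [b ~> b] then give [b ~> bot]. *)
Lemma cond_bot_of_inconsistent_seed f : Derives (likely_seed f) TBot -> G (TCond f PBot).
Proof.
  intros [l [Hl Hbot]].
  destruct (Forall_likely_seed_split f l Hl) as [ps [ls [Hps [Hlit [Hls Hincl]]]]].
  pose proof (thm_tconj_incl _ _ _ Hincl Hbot) as Hinc.
  set (P := pconj ps). set (b := PAnd f (PNot P)).
  assert (Hfb : G (TCond (PNot (PIff f b)) PBot)).
  { apply (mcs_s5f ls); [exact Hlit | exact Hls|].
    apply (thm_taut_mp _ _ Hinc). unfold b, P. taut. }
  assert (HbP : G (TCond b P)).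
  { apply (mcs_lle _ _ _ Hfb).
    apply (mcs_rck f ps); [exact Hps | apply ax_taut; unfold P; taut]. }
  apply (mcs_lle _ _ _ Hfb). apply (mcs_rck b [P; b]).
  - repeat constructor; [exact HbP | apply (mcs_thm G HG), ax_id].
  - apply ax_taut. unfold b, P. taut.
Qed.

Lemma likely_mcs_exists Om f :
  MCS Om -> cond_equiv G Om -> Om (TProp f) ->
  exists D, MCS D /\ cond_equiv G D /\ likely G f D /\ D (TProp f).
Proof.
  intros HOm HGOm Hf.
  assert (Hseed : consistent (likely_seed f)).
  { intros Hinc. apply (proj1 (mcs_pnot Om HOm f)); [|exact Hf].
    apply (mcs_thm_mp Om HOm (TCond f PBot)); [apply HGOm | apply ax_bot].
    exact (cond_bot_of_inconsistent_seed f Hinc). }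
  destruct (lindenbaum _ Hseed) as [D [HD Hseed_D]].
  exists D. split; [exact HD|]. split; [|split].
  - intros p q. split; intros Hpq.
    + apply Hseed_D. right. split; [exists p, q; now left | exact Hpq].
    + destruct (proj2 HG (TCond p q)) as [|Hnpq]; [assumption|].
      assert (HDn : D (TNot (TCond p q))).
      { apply Hseed_D. right. split; [exists p, q; now right | exact Hnpq]. }
      exfalso. exact (proj1 (mcs_not D HD _) HDn Hpq).
  - intros q Hq. apply Hseed_D. left. eauto.
  - apply Hseed_D. left. exists f. split; [reflexivity | apply (mcs_thm G HG), ax_id].
Qed.

End Conditionals.

Section CanonicalModel.
Variable I : (tform -> Prop) -> Prop.
Hypothesis HI : rep_set I.

Lemma CanS_mcs D p i : CanS I (D, p, i) -> MCS D.
Proof. intros [G [_ [HD _]]]. exact HD. Qed.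

Lemma can_psat D p i f :
  CanS I (D, p, i) -> (psat cstate (CanV I) (D, p, i) f <-> D (TProp f)).
Proof.
  intros HS. pose proof (CanS_mcs D p i HS) as HD.
  induction f; cbn [psat].
  - unfold CanV. tauto.
  - split; [tauto | intros Hbot; exact (proj1 HD (Derives_of_mem D TBot Hbot))].
  - rewrite (mcs_pnot D HD). tauto.
  - rewrite (mcs_pand D HD). tauto.
  - rewrite (mcs_por D HD). tauto.
  - rewrite (mcs_pimp D HD). tauto.
  - rewrite (mcs_piff D HD). tauto.
Qed.

Lemma can_ext G D p i f : I G ->
  (ext cstate (CanSi G) (CanV I) f (D, p, i) <-> CanSi G (D, p, i) /\ D (TProp f)).
Proof.
  intros HG. unfold ext. split; intros [HS Hf]; split; try exact HS;
    [apply (can_psat D p i) | apply <- (can_psat D p i)]; try exact Hf; now exists G.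
Qed.

Lemma can_R_serial s : CanS I s -> exists t, CanR I s t.
Proof.
  destruct s as [[D p] i]. intros HS. pose proof (CanS_mcs D p i HS) as HD.
  destruct (lindenbaum _ (believed_consistent D HD)) as [Om [HOm HDOm]].
  destruct (proj1 (proj2 HI) Om HOm) as [G [HG HGOm]].
  exists (Om, PBot, T0). split; [exact HS|]. split; [now exists G|]. exact HDOm.
Qed.

Lemma can_R_trans s t u : CanR I s t -> CanR I t u -> CanR I s u.
Proof.
  destruct s as [[D p] i], t as [[E q] j], u as [[F r] k].
  intros [HS [_ HDE]] [_ [HU HEF]]. split; [exact HS|]. split; [exact HU|].
  intros a Ha. apply HEF, HDE, (believed_transitive D (CanS_mcs D p i HS)), Ha.
Qed.

Lemma CanSi_unique G G' s : I G -> I G' -> CanSi G s -> CanSi G' s -> G = G'.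
Proof.
  destruct s as [[D p] i]. intros HG HG' [_ HGD] [_ HG'D].
  apply (proj2 (proj2 HI)); [exact HG | exact HG'|].
  intros a b. rewrite (HGD a b), (HG'D a b). reflexivity.
Qed.

Lemma can_limited G f : I G ->
  (exists x, ext cstate (CanSi G) (CanV I) f x) ->
  exists x, most cstate (CanGe G) (ext cstate (CanSi G) (CanV I) f) x.
Proof.
  intros HG [[[Om p] i] Hx]. apply (can_ext G Om p i f HG) in Hx as [[HOm HGOm] Hf].
  destruct (likely_mcs_exists G (proj1 HI G HG) Om f HOm HGOm Hf)
    as [D [HD [HGD [Hlikely HDf]]]].
  exists (D, f, T0). split.
  { apply (can_ext G D f T0 f HG). split; [split; assumption | exact HDf]. }
  intros [[E q] j] Hy _. apply (can_ext G E q j f HG) in Hy as [HE HEf].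
  split; [now split | split; [exact HE | left; now split]].
Qed.

End CanonicalModel.

Theorem lemma4 (I : (tform -> Prop) -> Prop) (HI : rep_set I) :
  TrustModel cstate (tform -> Prop) (CanS I) I CanSi CanGe (CanR I) (CanV I).
Proof.
  refine (conj _ (conj (can_R_serial I HI) (conj (can_R_trans I) (conj _ (conj _
            (conj _ (conj (CanSi_unique I HI) (conj _ (conj _ (can_limited I HI)))))))))).
  - intros s t [HS [HT _]]. now split.
  - intros G HG. exists (G, PBot, T0). split; [exact (proj1 HI G HG) | now intros p q].
  - intros G x HG Hx. now exists G.
  - intros x Hx. exact Hx.
  - intros G x y _ [Hx [Hy _]]. now split.
  - intros n x [Hx _]. exact Hx.
Qed.
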